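(* Let $f$ be a real quadratic form on $\mathbb R^n$. Then (1) at least one of the sets $\mathrm{St}(f)$ and $\widetilde C(f)$ is empty; (2) at least one of the sets $C(f)$ and $\widetilde{\mathrm{St}}(f)$ is empty.
   Context: $H_n=\{x\in\mathbb R^n:\sum x_i=0\}$. $C^-(f)=\{h\in H_n\setminus\{0\}: \partial f/\partial x_i(h)\le0\ \forall i\}$, $C^+(f)$ likewise with $\ge0$, $C(f)=C^+(f)\cup C^-(f)$. $\widetilde C(f)=\{v\in C(f):\ (\partial f/\partial x_1(v),\dots,\partial f/\partial x_n(v))\ne 0\}$. $\mathrm{St}(f)=\{a\in\mathbb R^n: a_i>0\ \forall i,\ \partial f/\partial x_i(a)=\partial f/\partial x_j(a)\ \forall i,j\}$. $P_n=\{x:x_i>0,\ \sum x_i=1\}$, $\overline P_n=\{x: x_i\ge0,\ \sum x_i=1\}$. A vector $u\in P_n$ is $P$-faithful for $f$ if $f(u)>0$ and $f(u)\le f(w)$ for all $w\in\overline P_n$, with $f(u)<f(w)$ whenever $w\in\overline P_n\setminus P_n$; $\widetilde{\mathrm{St}}(f)$ is the set of $P$-faithful vectors. *)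

(* quadratic forms as 2-homogeneous multivariate polynomials
   (multinomials' mpoly) over an arbitrary real closed field R (R = the reals
   is the paper's case); points of R^n are functions 'I_n -> R. *)
From HB Require Import structures.
From mathcomp Require Import all_boot all_order all_algebra.
From mathcomp Require Import mpoly.
Set Implicit Arguments. Unset Strict Implicit. Unset Printing Implicit Defensive.
Import Order.TTheory GRing.Theory Num.Theory.
Local Open Scope ring_scope.

Section Defs.
Variables (R : rcfType) (n : nat).
Implicit Types (f : {mpoly R[n]}) (x : 'I_n -> R).

Definition pd f (i : 'I_n) x : R := (mderiv i f).@[x].

Definition inH x : Prop := \sum_(i < n) x i = 0.

Definition Cminus f x : Prop :=
  inH x /\ x <> (fun _ => 0) /\ forall i, pd f i x <= 0.
Definition Cplus f x : Prop :=
  inH x /\ x <> (fun _ => 0) /\ forall i, pd f i x >= 0.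
Definition Cset f x : Prop := Cplus f x \/ Cminus f x.

Definition Ctilde f x : Prop := Cset f x /\ exists i, pd f i x <> 0.

Definition St f x : Prop :=
  (forall i, 0 < x i) /\ forall i j, pd f i x = pd f j x.

Definition inP x : Prop := (forall i, 0 < x i) /\ \sum_(i < n) x i = 1.
Definition inPbar x : Prop := (forall i, 0 <= x i) /\ \sum_(i < n) x i = 1.

(* P-faithful vectors: St~(f) *)
Definition Pfaithful f u : Prop :=
  inP u /\ 0 < f.@[u] /\
  (forall w, inPbar w -> f.@[u] <= f.@[w]) /\
  (forall w, inPbar w -> ~ inP w -> f.@[u] < f.@[w]).

End Defs.

(* For a quadratic form the gradient is linear, and the directional derivative
   [dderiv f x y = \sum_k y_k (d_k f)(x)] is symmetric in [x] and [y], equals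
   [2 f(x)] on the diagonal, and gives the exact expansion
   [f(x + t y) = f(x) + t dderiv f x y + t^2 f(y)].
   (1) If [a] is in St(f) with common partial derivative [c] and [v] is in
   [H_n], then [\sum_k a_k (d_k f)(v) = \sum_k v_k (d_k f)(a) = c \sum_k v_k = 0];
   as [a > 0], this forces the one-signed gradient of [f] at [v] to vanish.
   (2) Since the gradient is odd we may take [v] in C^-(f).  For a P-faithful
   [u], the segment [u + s v] stays in the closed simplex up to a boundary point
   [u + T v].  Minimality of [f(u)] on it forces
   [\sum_k u_k (d_k f)(v) = dderiv f u v >= 0], so the gradient at [v]
   vanishes; then [f(v) = 0] and [f] is constant on the segment, contradicting
   the strict inequality at the boundary point. *)
From HB Require Import structures.
From mathcomp Require Import all_boot all_order all_algebra.
From mathcomp Require Import mpoly.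
From mathcomp Require Import ring lra.
From Stdlib Require Import Classical_Prop FunctionalExtensionality.
Import Order.TTheory GRing.Theory Num.Theory.
Local Open Scope ring_scope.
Set Implicit Arguments. Unset Strict Implicit.

Lemma mdeg2P n (m : 'X_{1..n}) :
  mdeg m = 2%N -> exists i j, m = (U_(i) + U_(j))%MM.
Proof.
move=> hm.
have [i hi] : exists i, m i != 0%N.
  case: (pickP (fun i => m i != 0%N)) => [i hi|h]; first by exists i.
  suff m0 : m = 0%MM by move: hm; rewrite m0 mdeg0.
  by apply/mnmP => k; rewrite mnmE; move: (h k) => /= /negbFE /eqP.
have em : m = ((m - U_(i)) + U_(i))%MM.
  apply/mnmP => k; rewrite !mnmE; case: eqP => [<-|_]; last by rewrite subn0 addn0.
  by rewrite subnK // lt0n.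
have : mdeg (m - U_(i))%MM == 1%N.
  by move: hm; rewrite {1}em mdegD mdeg1 => /eqP; rewrite addn1 eqSS.
case/mdeg1P => j /eqP hj.
by exists j, i; rewrite {1}em hj.
Qed.

Lemma dhomog2_ind (R : nzRingType) n (P : {mpoly R[n]} -> Prop) :
  P 0 -> (forall p q, P p -> P q -> P (p + q)) ->
  (forall c p, P p -> P (c *: p)) -> (forall i j, P ('X_i * 'X_j)) ->
  forall f, f \is 2.-homog -> P f.
Proof.
move=> P0 PD PZ PX f hf.
rewrite (mpolyE f) big_seq; apply: big_ind => // m hm.
apply: PZ; have [i [j ->]] := mdeg2P (dhomog_mf hf hm).
by rewrite mpolyXD.
Qed.

Lemma mderivXU (R : nzRingType) n (i k : 'I_n) :
  mderiv k ('X_i : {mpoly R[n]}) = (i == k)%:R%:MP.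
Proof.
rewrite mderivX mnm1E; case: eqP => [<-|_]; last by rewrite scale0r.
have -> : (U_(i) - U_(i))%MM = 0%MM by apply/mnmP => k'; rewrite !mnmE subnn.
by rewrite mpolyX0 scale1r.
Qed.

Lemma sumr_pmul_eq0 (R : numDomainType) n (a g : 'I_n -> R) :
  (forall i, 0 < a i) -> (forall i, 0 <= g i) ->
  \sum_i a i * g i = 0 -> forall i, g i = 0.
Proof.
move=> ha hg hsum i.
have hag : forall k, true -> 0 <= a k * g k by move=> k _; rewrite mulr_ge0 // ltW.
move: (@psumr_eq0P _ _ _ _ hag hsum i isT) => /eqP; rewrite mulf_eq0 => /orP[|/eqP //].
by rewrite gt_eqF.
Qed.

Lemma ge0_of_ge0_near0 (R : realFieldType) (b F T : R) :
  0 < T -> (forall s, 0 < s <= T -> 0 <= b + s * F) -> 0 <= b.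
Proof.
move=> hT hb; rewrite leNgt; apply/negP => b_lt0.
set A := `|F|; have hFA : F <= A := ler_norm F.
have hA : 0 <= A := normr_ge0 F.
have hD : 0 < T * A - b by nra.
(* [s] is chosen so that [b + s * A = s * b / T < 0]. *)
set s := T * - b / (T * A - b).
have hs : 0 < s by rewrite divr_gt0 // mulr_gt0 // oppr_gt0.
have hsT : s <= T by rewrite ler_pdivrMr //; nra.
have hsD : s * (T * A - b) = T * - b by rewrite mulrAC -mulrA divff ?mulr1 // gt_eqF.
have := hb s (introT andP (conj hs hsT)).
have : s * F <= s * A by rewrite ler_wpM2l // ltW.
nra.
Qed.

Section QuadraticForm.
Variables (R : rcfType) (n : nat).
Implicit Types (f p q : {mpoly R[n]}) (x y u v : 'I_n -> R).

Lemma pd0 k x : pd (0 : {mpoly R[n]}) k x = 0.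
Proof. by rewrite /pd mderiv0 meval0. Qed.

Lemma pdD p q k x : pd (p + q) k x = pd p k x + pd q k x.
Proof. by rewrite /pd mderivD mevalD. Qed.

Lemma pdZ c p k x : pd (c *: p) k x = c * pd p k x.
Proof. by rewrite /pd mderivZ mevalZ. Qed.

Lemma pdXX i j k x :
  pd ('X_i * 'X_j) k x = (i == k)%:R * x j + x i * (j == k)%:R.
Proof. by rewrite /pd mderivM !mderivXU mevalD !mevalM !mevalC !mevalXU. Qed.

Lemma pd_oppx f k x : f \is 2.-homog -> pd f k (fun i => - x i) = - pd f k x.
Proof.
move: f; apply: dhomog2_ind => [|p q hp hq|c p hp|i j].
- by rewrite !pd0 oppr0.
- by rewrite !pdD hp hq opprD.
- by rewrite !pdZ hp mulrN.
- by rewrite !pdXX; ring.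
Qed.

Definition dderiv f x y := \sum_k y k * pd f k x.

Lemma dderiv0 x y : dderiv 0 x y = 0.
Proof. by rewrite /dderiv big1 // => k _; rewrite pd0 mulr0. Qed.

Lemma dderivD p q x y : dderiv (p + q) x y = dderiv p x y + dderiv q x y.
Proof. by rewrite /dderiv -big_split; apply: eq_bigr => k _; rewrite pdD mulrDr. Qed.

Lemma dderivZ c p x y : dderiv (c *: p) x y = c * dderiv p x y.
Proof. by rewrite /dderiv mulr_sumr; apply: eq_bigr => k _; rewrite pdZ mulrCA. Qed.

Lemma sum_mul_delta (g : 'I_n -> R) i c : \sum_k g k * ((i == k)%:R * c) = g i * c.
Proof.
rewrite (bigD1 i) //= eqxx mul1r big1 ?addr0 // => k hk.
by rewrite eq_sym (negbTE hk) mul0r mulr0.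
Qed.

Lemma dderivXX i j x y : dderiv ('X_i * 'X_j) x y = y i * x j + x i * y j.
Proof.
rewrite /dderiv; under eq_bigr do rewrite pdXX mulrDr.
rewrite big_split /= sum_mul_delta.
under eq_bigr => k _ do rewrite [x i * _]mulrC.
by rewrite sum_mul_delta [y j * _]mulrC.
Qed.

Lemma inH_exists_lt0 v : inH v -> v <> (fun _ => 0) -> exists i, v i < 0.
Proof.
move=> hH hv; case: (pickP (fun i => v i < 0)) => [i hi|h]; first by exists i.
have hge : forall i, true -> 0 <= v i by move=> i _; rewrite leNgt h.
by case: hv; apply: functional_extensionality => k; apply: (psumr_eq0P hge).
Qed.

Lemma simplex_exit u v : inP u -> inH v -> v <> (fun _ => 0) ->
  exists T, [/\ 0 < T,
    forall s, 0 <= s -> s <= T -> inPbar (fun k => u k + s * v k) &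
    ~ inP (fun k => u k + T * v k)].
Proof.
move=> [hu hsu] hH /(inH_exists_lt0 hH)[i0 hi0].
(* the first coordinate to vanish is one minimising [u i / - v i] over [v i < 0] *)
case: (arg_minP (P := fun i => v i < 0) (fun i => u i / - v i) hi0) => k hk hmin.
have hvk : 0 < - v k by rewrite oppr_gt0.
exists (u k / - v k); split=> [|s hs0 hsT|[hpos _]].
- by rewrite divr_gt0.
- split=> [i|]; last by rewrite big_split /= -mulr_sumr hH hsu mulr0 addr0.
  have := hu i; case: (ltP (v i) 0) => hvi.
  + have hvi' : 0 < - v i by rewrite oppr_gt0.
    have : s <= u i / - v i by apply: le_trans hsT (hmin i hvi).
    rewrite ler_pdivlMr //; lra.
  + have : 0 <= s * v i by rewrite mulr_ge0.
    lra.
- have := hpos k; have -> : u k + u k / - v k * v k = 0 by field; rewrite lt_eqF.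
  by rewrite ltxx.
Qed.

Section Homogeneous.
Variables (f : {mpoly R[n]}) (hf : f \is 2.-homog).

Lemma dderivC x y : dderiv f x y = dderiv f y x.
Proof.
move: f hf; apply: dhomog2_ind => [|p q hp hq|c p hp|i j].
- by rewrite !dderiv0.
- by rewrite !dderivD hp hq.
- by rewrite !dderivZ hp.
- by rewrite !dderivXX; ring.
Qed.

Lemma dderiv_diag x : dderiv f x x = 2 * f.@[x].
Proof.
move: f hf; apply: dhomog2_ind => [|p q hp hq|c p hp|i j].
- by rewrite dderiv0 meval0 mulr0.
- by rewrite !dderivD hp hq mevalD mulrDr.
- by rewrite !dderivZ hp mevalZ mulrCA.
- by rewrite dderivXX mevalM !mevalXU; ring.
Qed.

Lemma meval_line x y t :
  f.@[fun k => x k + t * y k] = f.@[x] + t * dderiv f x y + t ^+ 2 * f.@[y].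
Proof.
move: f hf; apply: dhomog2_ind => [|p q hp hq|c p hp|i j].
- by rewrite dderiv0 !meval0; ring.
- by rewrite dderivD !mevalD hp hq; ring.
- by rewrite dderivZ !mevalZ hp; ring.
- by rewrite dderivXX !mevalM !mevalXU; ring.
Qed.

Lemma grad_eq0_of_dderiv_ge0 a v : (forall i, 0 < a i) ->
  (forall i, pd f i v <= 0) -> 0 <= dderiv f a v -> forall i, pd f i v = 0.
Proof.
move=> ha hv hav.
have sum_le0 : \sum_i a i * pd f i v <= 0.
  rewrite -oppr_ge0 -sumrN; apply: sumr_ge0 => k _.
  by rewrite -mulrN mulr_ge0 ?oppr_ge0 // ltW.
have sum_eq0 : \sum_i a i * - pd f i v = 0.
  under eq_bigr do rewrite mulrN.
  by rewrite sumrN; apply/eqP; rewrite oppr_eq0 eq_le sum_le0 -/(dderiv f v a) dderivC.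
move=> i; apply/eqP; rewrite -oppr_eq0; apply/eqP; move: i.
by apply: (sumr_pmul_eq0 ha) sum_eq0 => i; rewrite oppr_ge0.
Qed.

Lemma Cplus_oppx v : Cplus f v -> Cminus f (fun k => - v k).
Proof.
move=> [hH [hv0 hge]]; split; first by rewrite /inH sumrN hH oppr0.
split=> [v0|i]; last by rewrite pd_oppx // oppr_le0.
apply: hv0; apply: functional_extensionality => k.
by apply/eqP; rewrite -oppr_eq0 (congr1 (fun w => w k) v0).
Qed.

Lemma St_Ctilde_disjoint a v : St f a -> ~ Ctilde f v.
Proof.
move=> [ha hc] [hC [i0 hi0]].
have [w [[hH [_ hle]] hw0]] : exists w, Cminus f w /\ pd f i0 w <> 0.
  case: hC => [/Cplus_oppx hw|hv]; last by exists v.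
  by exists (fun k => - v k); rewrite pd_oppx //; split=> // /eqP; rewrite oppr_eq0 => /eqP.
apply/hw0/(grad_eq0_of_dderiv_ge0 ha hle).
rewrite /dderiv (eq_bigr (fun k => w k * pd f i0 a)) => [|k _]; last by rewrite (hc k i0).
by rewrite -mulr_suml hH mul0r.
Qed.

Lemma Pfaithful_Cminus_disjoint u v : Pfaithful f u -> ~ Cminus f v.
Proof.
move=> [hPu [_ [hmin hstrict]]] [hH [hv0 hle]].
have [T [hT hseg hexit]] := simplex_exit hPu hH hv0.
have grad0 : forall i, pd f i v = 0.
  apply: (grad_eq0_of_dderiv_ge0 (proj1 hPu) hle).
  apply: (ge0_of_ge0_near0 (F := f.@[v]) hT) => s /andP[s_gt0 s_leT].
  have := hmin _ (hseg s (ltW s_gt0) s_leT); rewrite meval_line -subr_ge0.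
  have -> : f.@[u] + s * dderiv f u v + s ^+ 2 * f.@[v] - f.@[u] =
            s * (dderiv f u v + s * f.@[v]) by ring.
  by rewrite pmulr_rge0.
have dderiv_v0 y : dderiv f v y = 0 by rewrite /dderiv big1 // => k _; rewrite grad0 mulr0.
have fv0 : f.@[v] = 0.
  by have := dderiv_diag v; rewrite dderiv_v0 => /esym/eqP; rewrite mulf_eq0 pnatr_eq0 => /eqP.
have := hstrict _ (hseg T (ltW hT) (lexx T)) hexit.
by rewrite meval_line dderivC dderiv_v0 fv0 !mulr0 !addr0 ltxx.
Qed.

End Homogeneous.
End QuadraticForm.

Theorem proposition1 (R : rcfType) (n : nat) (f : {mpoly R[n]})
  (hf : f \is 2.-homog) :
  ((forall a : 'I_n -> R, ~ St f a) \/ (forall v : 'I_n -> R, ~ Ctilde f v)) /\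
  ((forall v : 'I_n -> R, ~ Cset f v) \/ (forall u : 'I_n -> R, ~ Pfaithful f u)).
Proof.
split.
- have [[a ha]|noSt] := classic (exists a, St f a).
  + by right=> v; apply: (St_Ctilde_disjoint hf ha).
  + by left=> a ha; apply: noSt; exists a.
- have [[v hv]|noC] := classic (exists v, Cset f v).
  + right=> u hu; case: hv => [/(Cplus_oppx hf)|]; exact: (Pfaithful_Cminus_disjoint hf hu).
  + by left=> v hv; apply: noC; exists v.
Qed.
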